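(* In the general public project problem (any $n\ge2$, any $c>0$, any cost shares $c_i>0$ with $\sum_i c_i=c$), there is no pay-only Groves mechanism that dominates the VCG mechanism.
   Context: General public project problem: $n\ge2$ players, decisions $D=\{0,1\}$, $\Theta_i=[0,c]$ with $c>0$, $v_i(d,\theta_i)=d(\theta_i-c_i)$ where $c_i>0$ and $\sum_ic_i=c$; efficient decision $f(\theta)=1$ iff $\sum_i\theta_i\ge c$. A Groves mechanism has taxes $t_i(\theta)=\sum_{j\ne i}v_j(f(\theta),\theta_j)+h_i(\theta_{-i})$ for arbitrary $h_i$; player $i$'s utility is $v_i(f(\theta),\theta_i)+t_i(\theta)$. The VCG (Clarke) mechanism uses $h_i(\theta_{-i})=-\max_{d\in D}\sum_{j\ne i}v_j(d,\theta_j)$. Pay-only: $t_i(\theta)\le0$ for all $\theta,i$. $t'$ dominates $t$ if $t_i(\theta)\le t'_i(\theta)$ for all $\theta,i$, strictly for some $\theta,i$. *)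

From Stdlib Require Import Reals Lra Lia Arith.
Open Scope R_scope.

(* Players are 0, ..., n-1.  A type profile is theta : nat -> R
   (only the values at i < n matter). *)

Fixpoint sumR (n : nat) (f : nat -> R) : R :=
  match n with
  | O => 0
  | S m => sumR m f + f m
  end.

Definition sum_excl (n i : nat) (f : nat -> R) : R :=
  sumR n (fun j => if Nat.eqb j i then 0 else f j).

Definition valid_profile (n : nat) (c : R) (theta : nat -> R) : Prop :=
  forall i, (i < n)%nat -> 0 <= theta i <= c.

(* decisions D = {0,1}, encoded as bool (true = 1 = build) *)
Definition valuation (d : bool) (theta_i c_i : R) : R :=
  if d then theta_i - c_i else 0.

Definition efficient (n : nat) (c : R) (theta : nat -> R) : bool :=
  if Rle_dec c (sumR n theta) then true else false.

(* h i theta is h_i(theta_{-i}): it may only depend on the types of the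
   other players (on the domain of valid profiles). *)
Definition depends_only_on_others (n : nat) (c : R) (h : nat -> (nat -> R) -> R) : Prop :=
  forall i theta theta', (i < n)%nat ->
    valid_profile n c theta -> valid_profile n c theta' ->
    (forall j, (j < n)%nat -> j <> i -> theta j = theta' j) ->
    h i theta = h i theta'.

Definition groves_tax (n : nat) (c : R) (cs : nat -> R) (h : nat -> (nat -> R) -> R)
    (i : nat) (theta : nat -> R) : R :=
  sum_excl n i (fun j => valuation (efficient n c theta) (theta j) (cs j)) + h i theta.

Definition vcg_h (n : nat) (cs : nat -> R) (i : nat) (theta : nat -> R) : R :=
  - Rmax (sum_excl n i (fun j => valuation false (theta j) (cs j)))
         (sum_excl n i (fun j => valuation true (theta j) (cs j))).

Definition pay_only (n : nat) (c : R) (t : nat -> (nat -> R) -> R) : Prop :=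
  forall theta i, valid_profile n c theta -> (i < n)%nat -> t i theta <= 0.

Definition dominates (n : nat) (c : R) (t' t : nat -> (nat -> R) -> R) : Prop :=
  (forall theta i, valid_profile n c theta -> (i < n)%nat -> t i theta <= t' i theta) /\
  (exists theta i, valid_profile n c theta /\ (i < n)%nat /\ t i theta < t' i theta).

From Stdlib Require Import Reals Lra Lia Arith.
Open Scope R_scope.

(* Two Groves mechanisms differ only in their functions h_i, so
   a Groves mechanism dominates VCG only if h_i(theta_{-i}) exceeds the VCG
   term -max(0, W_i) somewhere, where W_i = sum_{j<>i} (theta_j - c_j) is the
   welfare of the other players when the project is built.  We show that a
   pay-only Groves mechanism never does.  Since h_i ignores player i's own
   type, player i may be given any type x in [0, c]; pay-only then says
   h_i(theta_{-i}) <= - (others' welfare at the decision induced by x).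
   Reporting x = c always forces building, giving h_i <= -W_i; when the
   others' types sum to less than c, reporting x = 0 forces not building,
   giving h_i <= 0; and otherwise W_i >= c_i > 0, so -W_i = -max(0, W_i). *)

Lemma sumR_ext (n : nat) (f g : nat -> R) :
  (forall j, (j < n)%nat -> f j = g j) -> sumR n f = sumR n g.
Proof.
  induction n as [|n IH]; simpl; intros Hfg; [reflexivity|].
  rewrite IH by (intros; apply Hfg; lia). rewrite Hfg by lia. reflexivity.
Qed.

Lemma sumR_minus (n : nat) (f g : nat -> R) :
  sumR n (fun j => f j - g j) = sumR n f - sumR n g.
Proof. induction n as [|n IH]; simpl; [lra|]. rewrite IH; lra. Qed.

Lemma sumR_nonneg (n : nat) (f : nat -> R) :
  (forall j, (j < n)%nat -> 0 <= f j) -> 0 <= sumR n f.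
Proof.
  induction n as [|n IH]; simpl; intros Hf; [lra|].
  assert (0 <= sumR n f) by (apply IH; intros; apply Hf; lia).
  assert (0 <= f n) by (apply Hf; lia). lra.
Qed.

Lemma sumR_zero (n : nat) : sumR n (fun _ => 0) = 0.
Proof. induction n as [|n IH]; simpl; [lra|]. rewrite IH; lra. Qed.

Lemma sum_excl_ext (n i : nat) (f g : nat -> R) :
  (forall j, (j < n)%nat -> j <> i -> f j = g j) -> sum_excl n i f = sum_excl n i g.
Proof.
  intros Hfg. unfold sum_excl. apply sumR_ext. intros j Hj.
  destruct (Nat.eqb j i) eqn:E; [reflexivity|]. apply Nat.eqb_neq in E. auto.
Qed.

Lemma sum_excl_split (n i : nat) (f : nat -> R) :
  (i < n)%nat -> sumR n f = sum_excl n i f + f i.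
Proof.
  unfold sum_excl. induction n as [|n IH]; intros Hi; [lia|]. simpl.
  destruct (Nat.eqb n i) eqn:E.
  - apply Nat.eqb_eq in E; subst.
    rewrite (sumR_ext i (fun j => if Nat.eqb j i then 0 else f j) f); [lra|].
    intros j Hj. destruct (Nat.eqb j i) eqn:E2; [apply Nat.eqb_eq in E2; lia|reflexivity].
  - apply Nat.eqb_neq in E. rewrite IH by lia. lra.
Qed.

Lemma sum_excl_minus (n i : nat) (f g : nat -> R) :
  sum_excl n i (fun j => f j - g j) = sum_excl n i f - sum_excl n i g.
Proof.
  unfold sum_excl. rewrite <- sumR_minus. apply sumR_ext. intros j _.
  destruct (Nat.eqb j i); lra.
Qed.

Lemma sum_excl_nonneg (n i : nat) (f : nat -> R) :
  (forall j, (j < n)%nat -> j <> i -> 0 <= f j) -> 0 <= sum_excl n i f.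
Proof.
  intros Hf. unfold sum_excl. apply sumR_nonneg. intros j Hj.
  destruct (Nat.eqb j i) eqn:E; [lra|]. apply Nat.eqb_neq in E. auto.
Qed.

Definition others_welfare (n i : nat) (cs : nat -> R) (d : bool) (theta : nat -> R) : R :=
  sum_excl n i (fun j => valuation d (theta j) (cs j)).

Lemma others_welfare_false (n i : nat) (cs theta : nat -> R) :
  others_welfare n i cs false theta = 0.
Proof.
  unfold others_welfare, sum_excl, valuation.
  transitivity (sumR n (fun _ => 0)); [|apply sumR_zero].
  apply sumR_ext. intros j _. destruct (Nat.eqb j i); reflexivity.
Qed.

Lemma others_welfare_true (n i : nat) (c : R) (cs theta : nat -> R) :
  (i < n)%nat -> sumR n cs = c ->
  others_welfare n i cs true theta = sum_excl n i theta - (c - cs i).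
Proof.
  intros Hi Hsum. unfold others_welfare, valuation. rewrite sum_excl_minus.
  rewrite (sum_excl_split n i cs Hi) in Hsum. lra.
Qed.

Definition upd (theta : nat -> R) (i : nat) (x : R) : nat -> R :=
  fun j => if Nat.eqb j i then x else theta j.

Lemma upd_others (theta : nat -> R) (i j : nat) (x : R) : j <> i -> upd theta i x j = theta j.
Proof. intros Hji. unfold upd. apply Nat.eqb_neq in Hji. rewrite Hji. reflexivity. Qed.

Lemma upd_valid (n : nat) (c : R) (theta : nat -> R) (i : nat) (x : R) :
  valid_profile n c theta -> 0 <= x <= c -> valid_profile n c (upd theta i x).
Proof. intros Hv Hx j Hj. unfold upd. destruct (Nat.eqb j i); auto. Qed.

Lemma sum_excl_upd (n i : nat) (theta : nat -> R) (x : R) (g : nat -> R -> R) :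
  sum_excl n i (fun j => g j (upd theta i x j)) = sum_excl n i (fun j => g j (theta j)).
Proof. apply sum_excl_ext. intros j _ Hji. rewrite upd_others by exact Hji. reflexivity. Qed.

Lemma sumR_upd (n i : nat) (theta : nat -> R) (x : R) :
  (i < n)%nat -> sumR n (upd theta i x) = sum_excl n i theta + x.
Proof.
  intros Hi. rewrite (sum_excl_split n i) by exact Hi.
  rewrite (sum_excl_ext n i (upd theta i x) theta) by (intros j _ Hji; apply upd_others, Hji).
  unfold upd. rewrite Nat.eqb_refl. reflexivity.
Qed.

Lemma pay_only_groves_deviation_bound (n : nat) (c : R) (cs : nat -> R)
    (h : nat -> (nat -> R) -> R) (theta : nat -> R) (i : nat) (x : R) :
  depends_only_on_others n c h -> pay_only n c (groves_tax n c cs h) ->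
  valid_profile n c theta -> (i < n)%nat -> 0 <= x <= c ->
  h i theta <= - others_welfare n i cs (efficient n c (upd theta i x)) theta.
Proof.
  intros Hdep Hpay Hv Hi Hx.
  pose proof (upd_valid n c theta i x Hv Hx) as Hvx.
  assert (Hh : h i (upd theta i x) = h i theta).
  { apply Hdep; auto. intros j _ Hji. apply upd_others, Hji. }
  pose proof (Hpay (upd theta i x) i Hvx Hi) as Hneg.
  unfold groves_tax in Hneg.
  rewrite Hh, (sum_excl_upd n i theta x (fun j y => valuation _ y (cs j))) in Hneg.
  unfold others_welfare. lra.
Qed.

Lemma pay_only_groves_h_le_vcg (n : nat) (c : R) (cs : nat -> R)
    (h : nat -> (nat -> R) -> R) (theta : nat -> R) (i : nat) :
  0 < c -> (forall j, (j < n)%nat -> 0 < cs j) -> sumR n cs = c ->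
  depends_only_on_others n c h -> pay_only n c (groves_tax n c cs h) ->
  valid_profile n c theta -> (i < n)%nat ->
  h i theta <= vcg_h n cs i theta.
Proof.
  intros Hc Hcs Hsum Hdep Hpay Hv Hi.
  pose proof (pay_only_groves_deviation_bound n c cs h theta i) as Hbound.
  assert (Hothers : 0 <= sum_excl n i theta)
    by (apply sum_excl_nonneg; intros j Hj _; apply Hv, Hj).
  assert (Hbuild : h i theta <= - others_welfare n i cs true theta).
  { assert (Hbuilt : efficient n c (upd theta i c) = true).
    { unfold efficient. rewrite sumR_upd by exact Hi.
      destruct (Rle_dec c (sum_excl n i theta + c)); [reflexivity | lra]. }
    rewrite <- Hbuilt. apply Hbound; auto; lra. }
  unfold vcg_h. fold (others_welfare n i cs false theta) (others_welfare n i cs true theta).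
  rewrite others_welfare_false.
  rewrite (others_welfare_true n i c cs theta Hi Hsum) in *.
  pose proof (Hcs i Hi) as Hci.
  unfold Rmax. destruct (Rle_dec 0 (sum_excl n i theta - (c - cs i))); [lra|].
  (* Here the others' types sum to less than c, so reporting 0 leads to not
     building, and the bound becomes h_i <= 0. *)
  assert (Hnot : efficient n c (upd theta i 0) = false).
  { unfold efficient. rewrite sumR_upd by exact Hi.
    destruct (Rle_dec c (sum_excl n i theta + 0)); [lra | reflexivity]. }
  pose proof (Hbound 0 Hdep Hpay Hv Hi ltac:(lra)) as Hzero.
  rewrite Hnot, others_welfare_false in Hzero. lra.
Qed.

Lemma groves_tax_diff (n : nat) (c : R) (cs : nat -> R)
    (h h' : nat -> (nat -> R) -> R) (i : nat) (theta : nat -> R) :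
  groves_tax n c cs h i theta - groves_tax n c cs h' i theta = h i theta - h' i theta.
Proof. unfold groves_tax. ring. Qed.

Theorem theorem4 (n : nat) (c : R) (cs : nat -> R) :
  (2 <= n)%nat -> 0 < c ->
  (forall i, (i < n)%nat -> 0 < cs i) ->
  sumR n cs = c ->
  ~ (exists h : nat -> (nat -> R) -> R,
        depends_only_on_others n c h /\
        pay_only n c (groves_tax n c cs h) /\
        dominates n c (groves_tax n c cs h) (groves_tax n c cs (vcg_h n cs))).
Proof.
  intros _ Hc Hcs Hsum [h [Hdep [Hpay [_ [theta [i [Hv [Hi Hstrict]]]]]]]].
  pose proof (pay_only_groves_h_le_vcg n c cs h theta i Hc Hcs Hsum Hdep Hpay Hv Hi) as Hle.
  pose proof (groves_tax_diff n c cs h (vcg_h n cs) i theta) as Hdiff.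
  lra.
Qed.
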